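(* Let $X,X_1,X_2,\dots$ be random variables in a sub-linear expectation space $(\Omega,\mathscr H,\hat{\mathbb E})$ with $\{X_n\}$ independent, $X_n\overset d=X$ for all $n$, and $\hat{\mathbb E}[X]=\hat{\mathcal E}[X]=0$. Let $V_n^2=\sum_{i=1}^nX_i^2$, $l(x)=\hat{\mathbb E}[X^2\wedge x^2]$, and assume: (I) $\mathbb V(|X|\ge x)=o(x^{-2}l(x))$ as $x\to\infty$; (II) $\limsup_{x\to\infty}\hat{\mathbb E}[X^2\wedge x^2]/\hat{\mathcal E}[X^2\wedge x^2]<r^2$ for some $0<r<\infty$; (III) $\hat{\mathbb E}[(|X|-c)^+]\to0$ as $c\to\infty$; (IV) $x_n\to\infty$ and $x_n=o(\sqrt n)$. Let $b_0=\inf\{x\ge0:l(x)>0\}$ and $z_n=\inf\{s\ge b_0+1: l(s)/s^2\le x_n^2/n\}$. Then for every $0<\delta<r^{-2}$ and all sufficiently large $n$, $$\mathbb V\big(V_n^2\le\delta nl(z_n)\big)\le\exp\{-2x_n^2\}.$$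
   Context: Sub-linear expectation space: $\mathscr H$ is a linear space of real functions on a measurable space $(\Omega,\mathcal F)$, closed under $\varphi(X_1,\dots,X_n)$ for $\varphi$ bounded continuous or locally Lipschitz with polynomial growth; $\hat{\mathbb E}:\mathscr H\to[-\infty,\infty]$ is monotone, constant preserving, sub-additive and positively homogeneous. $\hat{\mathcal E}[X]=-\hat{\mathbb E}[-X]$; $\mathbb V(A)=\inf\{\hat{\mathbb E}[\xi]:I_A\le\xi,\xi\in\mathscr H\}$. Independence: $\mathbf Y$ is independent of $\mathbf X$ if $\hat{\mathbb E}[\varphi(\mathbf X,\mathbf Y)]=\hat{\mathbb E}[\hat{\mathbb E}[\varphi(\mathbf x,\mathbf Y)]|_{\mathbf x=\mathbf X}]$ for all locally Lipschitz $\varphi$ of polynomial growth (whenever the relevant expectations are finite); $\{X_n\}$ is independent if $X_{i+1}$ is independent of $(X_1,\dots,X_i)$ for each $i$. $X_n\overset d=X$ means $\hat{\mathbb E}[\varphi(X_n)]=\hat{\mathbb E}[\varphi(X)]$ for all such $\varphi$. $a\wedge b=\min(a,b)$. *)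

From HB Require Import structures.
From mathcomp Require Import all_boot all_order all_algebra.
From mathcomp Require Import all_classical all_reals all_analysis.
Set Implicit Arguments. Unset Strict Implicit. Unset Printing Implicit Defensive.
Import Order.TTheory GRing.Theory Num.Theory.
Import numFieldNormedType.Exports.
Local Open Scope classical_set_scope.
Local Open Scope ring_scope.

Definition locLip (R : realType) (V : normedModType R) (phi : V -> R) : Prop :=
  exists (C : R) (m : nat), forall x y : V,
    `|phi x - phi y| <= C * (1 + `|x| ^+ m + `|y| ^+ m) * `|x - y|.

Definition bdd_cont (R : realType) (V : normedModType R) (phi : V -> R) : Prop :=
  continuous phi /\ exists M : R, forall x, `|phi x| <= M.

Definition rvec (R : realType) (Omega : Type) (n : nat)
  (X : 'I_n -> Omega -> R) (w : Omega) : 'rV[R]_n := \row_i X i w.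

(* (Omega, H, E) is a sub-linear expectation space.  E is a total map on
   Omega -> R, but all its axioms only concern elements of H. *)
Record sublinear_space (R : realType) (Omega : Type) (H : set (Omega -> R))
    (E : (Omega -> R) -> \bar R) : Prop := {
  H_zero : H (fun _ => 0);
  H_add : forall X Y, H X -> H Y -> H (fun w => X w + Y w);
  H_scale : forall (c : R) X, H X -> H (fun w => c * X w);
  H_comp : forall (n : nat) (X : 'I_n -> Omega -> R) (phi : 'rV[R]_n -> R),
    (forall i, H (X i)) -> bdd_cont phi \/ locLip phi ->
    H (fun w => phi (rvec X w));
  E_mono : forall X Y, H X -> H Y -> (forall w, X w <= Y w) -> (E X <= E Y)%E;
  E_cst : forall c : R, E (fun _ => c) = c%:E;
  E_subadd : forall X Y, H X -> H Y -> (E X +? E Y)%E ->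
    (E (fun w => (X w + Y w)%R) <= E X + E Y)%E;
  E_homog : forall (l : R) X, 0 < l -> H X -> E (fun w => (l * X w)%R) = (l%:E * E X)%E
}.

Definition Elow (R : realType) (Omega : Type) (E : (Omega -> R) -> \bar R)
  (X : Omega -> R) : \bar R := (- E (fun w => (- X w)%R))%E.

Definition capV (R : realType) (Omega : Type) (H : set (Omega -> R))
  (E : (Omega -> R) -> \bar R) (A : set Omega) : \bar R :=
  ereal_inf [set E xi | xi in [set xi | H xi /\ forall w, \1_A w <= xi w]].

Definition indep_of (R : realType) (Omega : Type) (H : set (Omega -> R))
  (E : (Omega -> R) -> \bar R) (n : nat) (Y : Omega -> R)
  (X : 'I_n -> Omega -> R) : Prop :=
  forall phi : 'rV[R]_(n + 1) -> R, locLip phi ->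
    let psi := fun x : 'rV[R]_n => E (fun w => phi (row_mx x (\row_(j < 1) Y w))) in
    (forall x, psi x \is a fin_num) ->
    H (fun w => fine (psi (rvec X w))) ->
    E (fun w => phi (row_mx (rvec X w) (\row_(j < 1) Y w)))
      = E (fun w => fine (psi (rvec X w))).

Definition indep_seq (R : realType) (Omega : Type) (H : set (Omega -> R))
  (E : (Omega -> R) -> \bar R) (Xs : nat -> Omega -> R) : Prop :=
  forall i : nat, indep_of H E (Xs i) (fun j : 'I_i => Xs (nat_of_ord j)).

Definition ident_distr (R : realType) (Omega : Type)
  (E : (Omega -> R) -> \bar R) (X Y : Omega -> R) : Prop :=
  forall phi : R -> R, locLip phi -> E (phi \o X) = E (phi \o Y).

From HB Require Import structures.
From mathcomp Require Import all_boot all_order all_algebra.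
From mathcomp Require Import all_classical all_reals all_analysis.
From mathcomp Require Import ring lra.
Import Order.TTheory GRing.Theory Num.Theory.
Import numFieldNormedType.Exports.
Local Open Scope classical_set_scope.
Local Open Scope ring_scope.
Set Implicit Arguments. Unset Strict Implicit. Unset Printing Implicit Defensive.

(* Exponential Chebyshev with the truncated statistic [Y_i = (X_i^2 /\ z^2)/z^2].
   By independence and identical distribution,
   [V(sum X_i^2 <= delta n l(z)) <= exp(t delta n l(z)/z^2) E[exp(-t Y)]^n], and a
   second-order expansion of [exp(-t Y)] together with (I) and (II) gives
   [E[exp(-t Y)] <= exp(-(t/q - 1 - o(1)) l(z)/z^2)] with [q < r^2].  Choosing [t] and
   the truncation level [z = z_n] (large, and with [x_n^2/n <= 2 l(z)/z^2] by
   minimality of [z_n]) makes the exponent at most [-4 n l(z)/z^2 <= -2 x_n^2]. *)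

Lemma row_entry_le_norm (R : realType) n (v : 'rV[R]_n) i : `|v 0 i| <= `|v|.
Proof.
rewrite [`|v|]mx_normrE.
exact: (le_bigmax 0 (fun ij : 'I_1 * 'I_n => `|v ij.1 ij.2|) (0, i)).
Qed.

Definition locLip1 (R : realType) (phi : R -> R) (K : R) :=
  0 <= K /\ forall x y, `|phi x - phi y| <= K * (`|x| + `|y|) * `|x - y|.

Lemma locLip1_locLip (R : realType) (phi : R -> R) K : locLip1 phi K -> locLip phi.
Proof.
move=> [K0 HK]; exists K, 1%N => x y.
apply: (le_trans (HK x y)); rewrite !expr1.
by apply: ler_wpM2r => //; apply: ler_wpM2l => //; lra.
Qed.

Lemma locLip1_row_entry (R : realType) n (phi : R -> R) K i :
  locLip1 phi K -> forall v w : 'rV[R]_n,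
  `|phi (v 0 i) - phi (w 0 i)| <= K * (1 + `|v| + `|w|) * `|v - w|.
Proof.
move=> [K0 HK] v w; apply: (le_trans (HK _ _)).
have hv := row_entry_le_norm v i; have hw := row_entry_le_norm w i.
have hvw : `|v 0 i - w 0 i| <= `|v - w|.
  by have := row_entry_le_norm (v - w) i; rewrite !mxE.
apply: ler_pM => //; first by rewrite mulr_ge0 ?addr_ge0.
by apply: ler_pM => //; lra.
Qed.

Lemma normr_prodB_le_sum (R : realFieldType) n (a b : 'I_n -> R) :
  (forall i, `|a i| <= 1) -> (forall i, `|b i| <= 1) ->
  `|\prod_i a i - \prod_i b i| <= \sum_i `|a i - b i|.
Proof.
elim: n a b => [|n IH] a b ha hb; first by rewrite !big_ord0 subrr normr0.
rewrite !big_ord_recr /=.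
set A := \prod_(i < n) _; set B := \prod_(i < n) _.
have hAB : `|A - B| <= \sum_(i < n) `|a (widen_ord (leqnSn n) i) - b (widen_ord (leqnSn n) i)|.
  exact: IH.
have hB : `|B| <= 1 by rewrite normr_prod; apply: prodr_ile1 => i _; rewrite normr_ge0 hb.
have -> : A * a ord_max - B * b ord_max = (A - B) * a ord_max + B * (a ord_max - b ord_max).
  by ring.
apply: (le_trans (ler_normD _ _)); rewrite !normrM; apply: lerD.
  by rewrite -[X in _ <= X]mulr1; apply: ler_pM.
by rewrite -[X in _ <= X]mul1r; apply: ler_pM.
Qed.

Lemma locLip_prod_row (R : realType) n (h : R -> R) K :
  locLip1 h K -> (forall x, `|h x| <= 1) ->
  locLip (fun v : 'rV[R]_n => \prod_i h (v 0 i)).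
Proof.
move=> hK h1; exists (n%:R * K), 1%N => v w.
apply: (le_trans (normr_prodB_le_sum _ _)) => //.
have -> : n%:R * K * (1 + `|v| + `|w| ^+ 1) * `|v - w|
    = \sum_(i < n) (K * (1 + `|v| + `|w|) * `|v - w|).
  by rewrite sumr_const card_ord -mulr_natl; ring.
by apply: ler_sum => i _; exact: locLip1_row_entry.
Qed.

Lemma prod_row_mx_col (R : comNzRingType) n (h : R -> R) (x : 'rV[R]_n) (y : R) :
  \prod_(i < n + 1) h ((row_mx x (\row_(j < 1) y)) 0 i) = (\prod_(i < n) h (x 0 i)) * h y.
Proof.
rewrite big_split_ord /= big_ord1; congr (_ * _).
  by apply: eq_bigr => i _; rewrite row_mxEl.
by rewrite row_mxEr mxE.
Qed.

Lemma normr_minB_le (R : realFieldType) (a b m : R) : `|Num.min a m - Num.min b m| <= `|a - b|.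
Proof.
have n1 : a - b <= `|a - b| := ler_norm _.
have n2 : b - a <= `|a - b| by rewrite distrC; exact: ler_norm.
rewrite ler_norml.
have [ha|ha] := leP a m; have [hb|hb] := leP b m;
  rewrite ?(min_l ha) ?(min_r (ltW ha)) ?(min_l hb) ?(min_r (ltW hb)); apply/andP; split; lra.
Qed.

Lemma normr_expRNB_le (R : realType) (u v : R) : 0 <= u -> 0 <= v ->
  `|expR (- u) - expR (- v)| <= `|u - v|.
Proof.
wlog uv : u v / u <= v.
  move=> W u0 v0; have [h|h] := leP u v; first exact: W.
  by rewrite distrC (distrC u); apply: W => //; exact: ltW.
move=> u0 v0.
have evu : expR (- v) <= expR (- u) by rewrite ler_expR lerN2.
rewrite ger0_norm ?subr_ge0 // ler0_norm ?subr_le0 // opprB.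
have -> : expR (- v) = expR (- u) * expR (- (v - u)) by rewrite -expRD; congr expR; ring.
have h1 : 1 - (v - u) <= expR (- (v - u)) := expR_ge1Dx _.
have h2 : expR (- u) <= 1 by rewrite -expR0 ler_expR lerNl oppr0.
have h3 : 0 < expR (- u) := expR_gt0 _.
have h4 : 0 <= v - u by rewrite subr_ge0.
nra.
Qed.

Lemma expRN_le_quad (R : realType) (u : R) : 0 <= u -> expR (- u) <= 1 - u + u ^+ 2.
Proof.
move=> u0.
have h1 : 1 + u / 2 <= expR (u / 2) := expR_ge1Dx _.
have h2 : (1 + u / 2) * (1 + u / 2) <= expR u.
  have -> : expR u = expR (u / 2) * expR (u / 2) by rewrite -expRD; congr expR; field.
  by apply: ler_pM => //; lra.
have h3 : 0 < expR u := expR_gt0 _.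
rewrite expRN -[X in X <= _]mul1r ler_pdivrMr //.
have h4 : 0 < 1 - u + u ^+ 2 by nra.
apply: (le_trans _ (ler_wpM2l (ltW h4) h2)).
nra.
Qed.

Lemma locLip1_min_sqr (R : realType) (z : R) : locLip1 (fun x : R => Num.min (x ^+ 2) (z ^+ 2)) 1.
Proof.
split=> // x y; apply: (le_trans (normr_minB_le _ _ _)).
have -> : x ^+ 2 - y ^+ 2 = (x + y) * (x - y) by ring.
by rewrite mul1r normrM; apply: ler_wpM2r => //; exact: ler_normD.
Qed.

Lemma min_sqr_ratio_bounds (R : realFieldType) (z x : R) : 0 < z ->
  0 <= Num.min (x ^+ 2) (z ^+ 2) / z ^+ 2 <= 1.
Proof.
move=> z0; have z2 : 0 < z ^+ 2 by exact: exprn_gt0.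
apply/andP; split; last by rewrite ler_pdivrMr // mul1r ge_min lexx orbT.
by apply: divr_ge0; [rewrite le_min sqr_ge0 ltW | exact: ltW].
Qed.

Definition exp_trunc (R : realType) (t z x : R) : R :=
  expR (- (t * (Num.min (x ^+ 2) (z ^+ 2) / z ^+ 2))).

Lemma locLip1_exp_trunc (R : realType) (t z : R) : 0 < t -> 0 < z ->
  locLip1 (exp_trunc t z) (t / z ^+ 2).
Proof.
move=> t0 z0; have tz : 0 <= t / z ^+ 2 by rewrite divr_ge0 ?sqr_ge0 ?ltW.
split=> // x y; rewrite /exp_trunc.
have /andP[hx _] := min_sqr_ratio_bounds x z0; have /andP[hy _] := min_sqr_ratio_bounds y z0.
apply: (le_trans (normr_expRNB_le _ _)); [exact: mulr_ge0 (ltW t0) hx|exact: mulr_ge0 (ltW t0) hy|].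
have := (locLip1_min_sqr z).2 x y; rewrite mul1r => h.
set mx := Num.min (x ^+ 2) (z ^+ 2); set my := Num.min (y ^+ 2) (z ^+ 2).
have -> : t * (mx / z ^+ 2) - t * (my / z ^+ 2) = t / z ^+ 2 * (mx - my) by ring.
by rewrite normrM (ger0_norm tz) -mulrA; exact: ler_wpM2l.
Qed.

Lemma exp_trunc_bounds (R : realType) (t z x : R) : 0 < t -> 0 < z ->
  expR (- t) <= exp_trunc t z x <= 1.
Proof.
move=> t0 z0; have /andP[h0 h1] := min_sqr_ratio_bounds x z0.
rewrite /exp_trunc; apply/andP; split.
  by rewrite ler_expR lerN2 -[X in _ <= X]mulr1; apply: ler_wpM2l => //; exact: ltW.
by rewrite -expR0 ler_expR oppr_le0 mulr_ge0 // ltW.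
Qed.

(* A second-order Taylor bound for [exp (- t y)], with [y = X^2 /\ z^2 / z^2]; the
   quadratic term is absorbed into the linear one off the event [eps z <= |x|]. *)
Lemma exp_trunc_le_affine (R : realType) (t z eps x : R) : 0 < t -> 0 < z ->
  exp_trunc t z x <= 1 - (t - t ^+ 2 * eps ^+ 2) * (Num.min (x ^+ 2) (z ^+ 2) / z ^+ 2)
                       + t ^+ 2 * (eps * z <= `|x|)%R%:R.
Proof.
move=> t0 z0; have z2 : 0 < z ^+ 2 by exact: exprn_gt0.
set y := Num.min _ _ / _; have /andP[y0 y1] : 0 <= y <= 1 := min_sqr_ratio_bounds x z0.
have hy : y ^+ 2 <= eps ^+ 2 * y + (eps * z <= `|x|)%R%:R.
  have [_|hx] := leP (eps * z) `|x|; rewrite /=.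
    by rewrite mulr1n; have := sqr_ge0 eps; nra.
  have hyx : y <= x ^+ 2 / z ^+ 2 by rewrite ler_pM2r ?invr_gt0 // ge_min lexx.
  have hxe : x ^+ 2 / z ^+ 2 <= eps ^+ 2.
    rewrite ler_pdivrMr // -exprMn -real_normK ?num_real //.
    by rewrite !expr2; have := normr_ge0 x; nra.
  by rewrite mulr0n addr0; nra.
apply: (le_trans (expRN_le_quad _)); first exact: mulr_ge0 (ltW t0) y0.
have : t ^+ 2 * y ^+ 2 <= t ^+ 2 * (eps ^+ 2 * y + (eps * z <= `|x|)%R%:R).
  by apply: ler_wpM2l; [exact: sqr_ge0|].
move=> h; rewrite -/y exprMn mulrBl; rewrite mulrDr mulrA in h; lra.
Qed.

Section SublinearExpectation.
Variables (R : realType) (Omega : Type) (H : set (Omega -> R))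
  (E : (Omega -> R) -> \bar R).
Hypothesis SL : sublinear_space H E.

Lemma H_cst c : H (fun _ => c).
Proof.
apply: (@H_comp _ _ _ _ SL 0 (fun _ _ => 0) (fun _ : 'rV[R]_0 => c)); first by case.
by left; split; [exact: cst_continuous | exists `|c|].
Qed.

Lemma H_comp1 f phi K : H f -> locLip1 phi K -> H (fun w => phi (f w)).
Proof.
move=> Hf hK.
have := @H_comp _ _ _ _ SL 1 (fun _ => f) (fun v : 'rV[R]_1 => phi (v 0 0)).
rewrite /rvec (_ : (fun w => _) = (fun w => phi (f w))); last by apply: funext => w; rewrite mxE.
apply=> //; right; exists K, 1%N => x y; rewrite !expr1; exact: locLip1_row_entry.
Qed.

Lemma H_opp f : H f -> H (fun w => - f w).
Proof.
move=> /(H_scale SL (-1)).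
by rewrite (_ : (fun w => _) = (fun w => - f w)) //; apply: funext => w; rewrite mulN1r.
Qed.

Lemma H_prod n (X : 'I_n -> Omega -> R) h K : (forall i, H (X i)) -> locLip1 h K ->
  (forall x, `|h x| <= 1) -> H (fun w => \prod_i h (X i w)).
Proof.
move=> HX hK h1.
have := H_comp SL HX (or_intror (locLip_prod_row n hK h1)).
rewrite /rvec (_ : (fun w => _) = (fun w => \prod_i h (X i w))) //.
by apply: funext => w; apply: eq_bigr => i _; rewrite mxE.
Qed.

Lemma E_bounded f a b : H f -> (forall w, a <= f w <= b) -> (a%:E <= E f <= b%:E)%E.
Proof.
move=> Hf hab; rewrite -(E_cst SL a) -(E_cst SL b).
by apply/andP; split; apply: (E_mono SL) => //; try exact: H_cst;
  move=> w; case/andP: (hab w).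
Qed.

Lemma E_bounded_fin_num f a b : H f -> (forall w, a <= f w <= b) -> E f \is a fin_num.
Proof. by move=> Hf /(E_bounded Hf) /andP[]; case: (E f). Qed.

Lemma E_add_fin_num f g : H f -> H g -> E f \is a fin_num -> E g \is a fin_num ->
  (E (fun w => (f w + g w)%R) <= E f + E g)%E.
Proof. by move=> Hf Hg ff fg; apply: (E_subadd SL) => //; exact: fin_num_adde_defl. Qed.

Lemma Elow_le_E f : H f -> E f \is a fin_num -> E (fun w => - f w) \is a fin_num ->
  (Elow E f <= E f)%E.
Proof.
move=> Hf ff fg.
have := E_add_fin_num Hf (H_opp Hf) ff fg.
rewrite (_ : (fun w => f w + - f w) = (fun _ => 0%R)); last by apply: funext => w; rewrite subrr.
rewrite (E_cst SL) /Elow; move: ff fg; rewrite !fin_numE.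
case: (E f) => // a _; case: (E (fun w => - f w)) => // b _.
by rewrite -EFinD !lee_fin; lra.
Qed.

Lemma capV_le_E A xi : H xi -> (forall w, \1_A w <= xi w) -> (capV H E A <= E xi)%E.
Proof. by move=> Hxi hxi; apply: ereal_inf_lbound; exists xi. Qed.

(* [1_A] need not belong to [H]: the bound is proved for every [xi >= 1_A] of [H]
   and passed to the infimum. *)
Lemma E_le_add_capV f g (b : R) (A : set Omega) : H f -> H g -> 0 < b ->
  E f \is a fin_num -> E g \is a fin_num ->
  (forall w, f w <= g w + b * \1_A w) ->
  (E f <= E g + b%:E * capV H E A)%E.
Proof.
move=> Hf Hg b0 ff fg hfg.
have key : (((fine (E f) - fine (E g)) / b)%:E <= capV H E A)%E.
  apply: le_ereal_inf_tmp => y [xi [Hxi hxi] <-].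
  have Hbxi : H (fun w => b * xi w) := H_scale SL b Hxi.
  have h1 : (E f <= E (fun w => (g w + b * xi w)%R))%E.
    apply: (E_mono SL) => // [|w]; first exact: (H_add SL).
    apply: (le_trans (hfg w)); rewrite lerD2l.
    by apply: ler_wpM2l; [exact: ltW | exact: hxi].
  have h2 : (E (fun w => (g w + b * xi w)%R) <= E g + b%:E * E xi)%E.
    by rewrite -(E_homog SL) //; apply: (E_subadd SL) => //; exact: fin_num_adde_defr.
  move: ff fg (le_trans h1 h2); rewrite !fin_numE.
  case: (E f) => // a _; case: (E g) => // c _.
  case: (E xi) => [s||] /=.
  - by rewrite -EFinM -EFinD !lee_fin ler_pdivrMr //; lra.
  - by rewrite leey.
  - by rewrite mulrNy gtr0_sg // mul1e addeNy leeNy_eq.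
have -> : E f = (fine (E g))%:E + ((fine (E f) - fine (E g)) / b * b)%:E.
  by rewrite divfK ?gt_eqF // -EFinD addrC subrK fineK.
rewrite fineK // leeD2l // EFinM muleC.
by apply: lee_wpmul2l => //; rewrite lee_fin ltW.
Qed.

Lemma E_prod_indep (Xs : nat -> Omega -> R) (h : R -> R) K (c : R) :
  (forall i, H (Xs i)) -> indep_seq H E Xs -> locLip1 h K ->
  (forall x, `|h x| <= 1) -> (forall x, 0 < h x) -> 0 < c ->
  (forall i, E (fun w => h (Xs i w)) = c%:E) ->
  forall n, E (fun w => \prod_(i < n) h (Xs i w)) = (c ^+ n)%:E.
Proof.
move=> HXs Hind hK h1 hpos c0 hc; elim=> [|n IH].
  rewrite (_ : (fun w => _) = (fun _ => 1)) ?(E_cst SL) //.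
  by apply: funext => w; rewrite big_ord0.
pose phi (v : 'rV[R]_(n + 1)) := \prod_i h (v 0 i).
have Ephi x : E (fun w => phi (row_mx x (\row_(j < 1) Xs n w)))
              = ((\prod_(i < n) h (x 0 i)) * c)%:E.
  rewrite /phi (_ : (fun w => _) = (fun w => (\prod_(i < n) h (x 0 i)) * h (Xs n w))).
    by rewrite (E_homog SL) ?hc ?prodr_gt0 //; exact: H_comp1 hK.
  by apply: funext => w; rewrite prod_row_mx_col.
have HXprod : H (fun w => \prod_(i < n) h (Xs i w)) by exact: H_prod hK h1.
have -> : (fun w => \prod_(i < n.+1) h (Xs i w))
    = (fun w => phi (row_mx (rvec (fun j : 'I_n => Xs j) w) (\row_(j < 1) Xs n w))).
  apply: funext => w; rewrite /phi prod_row_mx_col big_ord_recr /=; congr (_ * _).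
  by apply: eq_bigr => i _; rewrite mxE.
have Epsi : (fun w => fine (E (fun w' =>
               phi (row_mx (rvec (fun j : 'I_n => Xs j) w) (\row_(j < 1) Xs n w')))))
            = (fun w => c * \prod_(i < n) h (Xs i w)).
  apply: funext => w; rewrite Ephi /= mulrC; congr (_ * _).
  by apply: eq_bigr => i _; rewrite mxE.
rewrite (Hind n phi (locLip_prod_row _ hK h1)) /= ?Epsi.
- by rewrite (E_homog SL) // IH -EFinM exprS.
- by move=> x; rewrite Ephi.
- exact: (H_scale SL).
Qed.

End SublinearExpectation.

Section TruncatedSecondMoment.
Variables (R : realType) (Omega : Type) (H : set (Omega -> R))
  (E : (Omega -> R) -> \bar R) (X : Omega -> R).
Hypotheses (SL : sublinear_space H E) (HX : H X).

Definition trunc_sqr (s : R) (w : Omega) : R := Num.min (X w ^+ 2) (s ^+ 2).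
Definition trunc_moment (s : R) : R := fine (E (trunc_sqr s)).
Definition trunc_moment_low (s : R) : R := fine (Elow E (trunc_sqr s)).

Lemma trunc_sqr_bounds s w : 0 <= trunc_sqr s w <= s ^+ 2.
Proof. by rewrite /trunc_sqr le_min !sqr_ge0 /= ge_min lexx orbT. Qed.

Lemma H_trunc_sqr s : H (trunc_sqr s).
Proof. exact: (H_comp1 SL HX (locLip1_min_sqr s)). Qed.

Lemma E_trunc_sqr s : E (trunc_sqr s) = (trunc_moment s)%:E.
Proof.
by rewrite fineK //; apply: (E_bounded_fin_num SL (H_trunc_sqr s) (trunc_sqr_bounds s)).
Qed.

Lemma Elow_trunc_sqr s : Elow E (trunc_sqr s) = (trunc_moment_low s)%:E.
Proof.
rewrite fineK // /Elow fin_numN.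
apply: (E_bounded_fin_num SL (a := - s ^+ 2) (b := 0) (H_opp SL (H_trunc_sqr s))) => w.
by have /andP[h1 h2] := trunc_sqr_bounds s w; apply/andP; split; lra.
Qed.

Lemma trunc_moment_ge0 s : 0 <= trunc_moment s.
Proof.
have /andP[+ _] := E_bounded SL (H_trunc_sqr s) (trunc_sqr_bounds s).
by rewrite E_trunc_sqr lee_fin.
Qed.

Lemma trunc_moment_le_homo s s' : 0 <= s -> s <= s' -> trunc_moment s <= trunc_moment s'.
Proof.
move=> s0 ss'; rewrite -lee_fin -!E_trunc_sqr.
apply: (E_mono SL); [exact: H_trunc_sqr | exact: H_trunc_sqr | move=> w].
rewrite /trunc_sqr le_min !ge_min lexx /= orbC.
by rewrite lerXn2r // nnegrE (le_trans s0).
Qed.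

Lemma trunc_moment_low_le s : trunc_moment_low s <= trunc_moment s.
Proof.
rewrite -lee_fin -Elow_trunc_sqr -E_trunc_sqr.
apply: (Elow_le_E SL (H_trunc_sqr s)); first by rewrite E_trunc_sqr.
by rewrite -fin_numN -/(Elow E (trunc_sqr s)) Elow_trunc_sqr.
Qed.

Lemma trunc_moment_ratio_near (q : R) :
  (\forall x \near +oo, (0 < Elow E (trunc_sqr x))%E /\
                        (E (trunc_sqr x) <= q%:E * Elow E (trunc_sqr x))%E) ->
  \forall x \near +oo, 0 < trunc_moment_low x /\ trunc_moment x <= q * trunc_moment_low x.
Proof. by apply: filterS => x; rewrite Elow_trunc_sqr E_trunc_sqr lte_fin -EFinM lee_fin. Qed.

Lemma trunc_moment_ratio_pos (q : R) :
  (\forall x \near +oo, 0 < trunc_moment_low x /\ trunc_moment x <= q * trunc_moment_low x) ->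
  0 < q /\ exists x, 0 <= x /\ 0 < trunc_moment x.
Proof.
move=> [X1 [_ hX1]]; set x := Num.max X1 0 + 1.
have [X1x x0] : X1 < x /\ 0 < x by split; rewrite /x ltr_pwDr // le_max lexx ?orbT.
have [lo0 lq] := hX1 x X1x; have lo_le := trunc_moment_low_le x.
split; first by rewrite -(pmulr_lgt0 _ lo0); lra.
by exists x; split; [exact: ltW | exact: lt_le_trans lo0 lo_le].
Qed.

Lemma trunc_moment_le_tail s eps V : 0 < s -> 0 < eps ->
  (capV H E [set w | (eps * s <= `|X w|)%R] <= V%:E)%E ->
  trunc_moment s <= (eps * s) ^+ 2 + s ^+ 2 * V.
Proof.
move=> s0 e0 hV; have s2 : 0 < s ^+ 2 by exact: exprn_gt0.
set A := [set w | eps * s <= `|X w|].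
have pw w : trunc_sqr s w <= (eps * s) ^+ 2 + s ^+ 2 * \1_A w.
  rewrite indicE; have [wA|wA] := boolP (w \in A); rewrite /= ?mulr1 ?mulr0 ?addr0.
    have /andP[_ h] := trunc_sqr_bounds s w; by rewrite (le_trans h) // lerDr sqr_ge0.
  have hX : `|X w| < eps * s by rewrite ltNge; apply: contra wA; rewrite inE.
  rewrite /trunc_sqr ge_min -real_normK ?num_real //.
  by apply/orP; left; rewrite !expr2; have := normr_ge0 (X w); nra.
have := E_le_add_capV SL (H_trunc_sqr s) (H_cst SL ((eps * s) ^+ 2)) s2 _ _ pw.
rewrite E_trunc_sqr (E_cst SL) => /(_ isT isT).
move: hV; case: (capV H E A) => [c||] //.
- rewrite !lee_fin => hc h; apply: (le_trans h).
  by rewrite lerD2l ler_wpM2l ?sqr_ge0.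
- by rewrite mulrNy gtr0_sg // mul1e addeNy leeNy_eq.
Qed.

Lemma trunc_moment_sqr_small :
  (forall eps : R, 0 < eps -> \forall x \near +oo,
     (capV H E [set w | (x <= `|X w|)%R] <= (eps * (trunc_moment x / x ^+ 2))%:E)%E) ->
  forall th : R, 0 < th -> \forall s \near +oo, trunc_moment s <= th * s ^+ 2.
Proof.
move=> hI th th0.
set e := Num.min 1 (th / 2).
have e0 : 0 < e by rewrite lt_min ltr01 divr_gt0.
have e1 : e <= 1 by rewrite ge_min lexx.
have eth : e <= th / 2 by rewrite ge_min lexx orbT.
have [Y0 [_ hY0]] := hI (e ^+ 2 / 2) (divr_gt0 (exprn_gt0 2 e0) (ltr0Sn _ 1)).
exists (Num.max (Y0 / e) 0); split; first exact: num_real.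
move=> s; rewrite gt_max => /andP[sY s0].
have es0 : 0 < e * s by rewrite mulr_gt0.
have hYes : Y0 < e * s by rewrite mulrC -ltr_pdivrMr.
have := trunc_moment_le_tail s0 e0 (hY0 (e * s) hYes).
have -> : s ^+ 2 * (e ^+ 2 / 2 * (trunc_moment (e * s) / (e * s) ^+ 2))
    = trunc_moment (e * s) / 2.
  by field; apply/andP; split; rewrite gt_eqF.
have : trunc_moment (e * s) <= trunc_moment s.
  by apply: trunc_moment_le_homo; [exact: ltW | exact: ler_piMl (ltW s0) e1].
have : e ^+ 2 <= e by rewrite expr2; exact: ler_piMr (ltW e0) e1.
have : 0 <= s ^+ 2 by exact: sqr_ge0.
rewrite exprMn; nra.
Qed.

Lemma E_exp_trunc_le_capV (Z t eps : R) : 0 < Z -> 0 < t -> t * eps ^+ 2 < 1 ->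
  (E (fun w => exp_trunc t Z (X w))
     <= (1 - (t - t ^+ 2 * eps ^+ 2) * (trunc_moment_low Z / Z ^+ 2))%:E
        + (t ^+ 2)%:E * capV H E [set w | (eps * Z <= `|X w|)%R])%E.
Proof.
move=> Z0 t0 te; have Z2 : 0 < Z ^+ 2 by exact: exprn_gt0.
set a := t - t ^+ 2 * eps ^+ 2; have a0 : 0 < a by rewrite /a; nra.
set A := [set w | (eps * Z <= `|X w|)%R].
set g := fun w => 1 + a * (Z ^- 2 * - trunc_sqr Z w).
have Hh : H (fun w => exp_trunc t Z (X w)) := H_comp1 SL HX (locLip1_exp_trunc t0 Z0).
have Hm : H (fun w => - trunc_sqr Z w) := H_opp SL (H_trunc_sqr Z).
have Hg1 : H (fun w => a * (Z ^- 2 * - trunc_sqr Z w)) by do 2 apply: (H_scale SL).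
have Hg : H g := H_add SL (H_cst SL 1) Hg1.
have Eg : (E g <= (1 - a * (trunc_moment_low Z / Z ^+ 2))%:E)%E.
  have Em : E (fun w => - trunc_sqr Z w) = (- trunc_moment_low Z)%:E.
    by rewrite EFinN -Elow_trunc_sqr /Elow oppeK.
  have Eg1 : E (fun w => a * (Z ^- 2 * - trunc_sqr Z w))
             = (a * (Z ^- 2 * - trunc_moment_low Z))%:E.
    rewrite (E_homog SL) ?(E_homog SL) ?invr_gt0 //; last exact: (H_scale SL).
    by rewrite Em -!EFinM.
  apply: (le_trans (E_add_fin_num SL (H_cst SL 1) Hg1 _ _)); rewrite ?(E_cst SL) ?Eg1 //.
  by rewrite -EFinD lee_fin; lra.
have pw w : exp_trunc t Z (X w) <= g w + t ^+ 2 * \1_A w.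
  have -> : g w = 1 - a * (Num.min (X w ^+ 2) (Z ^+ 2) / Z ^+ 2) by rewrite /g /trunc_sqr; ring.
  have hA : (w \in A) = (eps * Z <= `|X w|)%R by apply/idP/idP => [/set_mem|/mem_set].
  by rewrite indicE hA; exact: exp_trunc_le_affine.
have fh : E (fun w => exp_trunc t Z (X w)) \is a fin_num.
  exact: (E_bounded_fin_num SL Hh (fun w => exp_trunc_bounds (X w) t0 Z0)).
have fg : E g \is a fin_num.
  apply: (E_bounded_fin_num SL (a := 1 - a) (b := 1) Hg) => w.
  have /andP[m0 mZ] := trunc_sqr_bounds Z w.
  have y0 : 0 <= Z ^- 2 * trunc_sqr Z w by apply: mulr_ge0 => //; rewrite invr_ge0; exact: ltW.
  have y1 : Z ^- 2 * trunc_sqr Z w <= 1 by rewrite ler_pdivrMl // mulr1.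
  by rewrite /g mulrN; apply/andP; split; nra.
apply: (le_trans (E_le_add_capV SL Hh Hg (exprn_gt0 2 t0) fh fg pw)).
exact: leeD2r.
Qed.

(* (II) replaces the lower moment by [l(Z)/q]; (I) makes the capacity term at most
   [l(Z)/(t Z)^2]. *)
Lemma E_exp_trunc_le (Z t eps q : R) : 0 < Z -> 0 < t -> 0 < eps -> eps <= 1 ->
  t * eps ^+ 2 < 1 -> 0 < q -> trunc_moment Z <= q * trunc_moment_low Z ->
  (capV H E [set w | (eps * Z <= `|X w|)%R]
     <= (eps ^+ 2 / t ^+ 2 * (trunc_moment (eps * Z) / (eps * Z) ^+ 2))%:E)%E ->
  (E (fun w => exp_trunc t Z (X w))
     <= (expR (- (((t - t ^+ 2 * eps ^+ 2) / q - 1) * (trunc_moment Z / Z ^+ 2))))%:E)%E.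
Proof.
move=> Z0 t0 e0 e1 te q0 hq hcap.
have Z2 : 0 < Z ^+ 2 by exact: exprn_gt0.
set a := t - t ^+ 2 * eps ^+ 2; have a0 : 0 < a by rewrite /a; nra.
set p := trunc_moment Z / Z ^+ 2.
have hcapp : t ^+ 2 * (eps ^+ 2 / t ^+ 2 * (trunc_moment (eps * Z) / (eps * Z) ^+ 2)) <= p.
  have -> : t ^+ 2 * (eps ^+ 2 / t ^+ 2 * (trunc_moment (eps * Z) / (eps * Z) ^+ 2))
          = trunc_moment (eps * Z) / Z ^+ 2.
    by field; rewrite !gt_eqF.
  rewrite ler_pM2r ?invr_gt0 //; apply: trunc_moment_le_homo.
    by rewrite mulr_ge0 ?ltW.
  exact: ler_piMl (ltW Z0) e1.
have hlo : a * (p / q) <= a * (trunc_moment_low Z / Z ^+ 2).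
  by rewrite ler_pM2l // /p mulrAC ler_pM2r ?invr_gt0 // ler_pdivrMr // mulrC.
have hexp : 1 - a * (trunc_moment_low Z / Z ^+ 2) + p <= expR (- ((a / q - 1) * p)).
  apply: le_trans (expR_ge1Dx _).
  have -> : 1 + - ((a / q - 1) * p) = 1 - a * (p / q) + p by field; rewrite gt_eqF.
  lra.
apply: (le_trans (E_exp_trunc_le_capV Z0 t0 te)); rewrite -/a.
move: hcap; case: (capV H E _) => [c||] //.
- rewrite -EFinM -EFinD !lee_fin => hc.
  apply: le_trans hexp; rewrite lerD2l.
  by apply: le_trans hcapp; rewrite ler_pM2l ?exprn_gt0.
- by move=> _; rewrite mulrNy gtr0_sg ?exprn_gt0 // mul1e addeNy leNye.
Qed.

Variable Xs : nat -> Omega -> R.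
Hypotheses (HXs : forall i, H (Xs i)) (Hind : indep_seq H E Xs)
  (Hid : forall i, ident_distr E (Xs i) X).

(* Exponential Chebyshev: the event is dominated by
   [exp (t delta n p) * prod_i exp_trunc t Z (X_i)], whose expectation factorizes. *)
Lemma capV_sum_sqr_le n (Z t delta kap : R) : 0 < Z -> 0 < t ->
  (E (fun w => exp_trunc t Z (X w)) <= (expR (- (kap * (trunc_moment Z / Z ^+ 2))))%:E)%E ->
  (capV H E [set w | (\sum_(i < n) Xs i w ^+ 2 <= delta * n%:R * trunc_moment Z)%R]
     <= (expR (- ((kap - t * delta) * (n%:R * (trunc_moment Z / Z ^+ 2)))))%:E)%E.
Proof.
move=> Z0 t0 hc; have Z2 : 0 < Z ^+ 2 by exact: exprn_gt0.
set p := trunc_moment Z / Z ^+ 2.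
have hK := locLip1_exp_trunc t0 Z0.
have hpos x : 0 < exp_trunc t Z x := expR_gt0 _.
have hnorm x : `|exp_trunc t Z x| <= 1.
  by rewrite ger0_norm ?(ltW (hpos x)) //; case/andP: (exp_trunc_bounds x t0 Z0).
have Hh : H (fun w => exp_trunc t Z (X w)) := H_comp1 SL HX hK.
have hbd w : expR (- t) <= exp_trunc t Z (X w) <= 1 := exp_trunc_bounds (X w) t0 Z0.
set c := fine (E (fun w => exp_trunc t Z (X w))).
have Ec : E (fun w => exp_trunc t Z (X w)) = c%:E.
  by rewrite fineK //; exact: (E_bounded_fin_num SL Hh hbd).
have c0 : 0 < c.
  have /andP[+ _] := E_bounded SL Hh hbd; rewrite Ec lee_fin.
  exact: lt_le_trans (expR_gt0 _).
have hid i : E (fun w => exp_trunc t Z (Xs i w)) = c%:E.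
  by rewrite -Ec; exact: (Hid i (locLip1_locLip hK)).
have EF := E_prod_indep SL HXs Hind hK hnorm hpos c0 hid n.
set C := expR (t * delta * n%:R * p).
set A := [set w | _].
set xi := fun w => C * \prod_(i < n) exp_trunc t Z (Xs i w).
have Hprod : H (fun w => \prod_(i < n) exp_trunc t Z (Xs i w)).
  exact: (H_prod SL HXs hK hnorm).
have Hxi : H xi := H_scale SL C Hprod.
have hxi w : \1_A w <= xi w.
  rewrite indicE; case: (boolP (w \in A)) => [/set_mem /= hA|_] /=; last first.
    by rewrite mulr0n; apply: mulr_ge0; [exact: expR_ge0 | apply: prodr_ge0 => i _; exact: ltW].
  rewrite /xi /C /exp_trunc -expR_sum -expRD sumrN -mulr_sumr.
  apply: le_trans (expR_ge1Dx _); rewrite lerDl subr_ge0 -!mulrA ler_pM2l //.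
  apply: le_trans (_ : \sum_(i < n) Xs i w ^+ 2 / Z ^+ 2 <= _).
    apply: ler_sum => i _; apply: ler_wpM2r; [by rewrite invr_ge0 ltW | by rewrite ge_min lexx].
  by rewrite -mulr_suml /p !mulrA ler_pM2r ?invr_gt0.
apply: (le_trans (capV_le_E E Hxi hxi)).
rewrite /xi (E_homog SL) ?expR_gt0 // EF -EFinM lee_fin.
have hcn : c ^+ n <= expR (- (kap * p)) ^+ n.
  by apply: lerXn2r; rewrite ?nnegrE ?expR_ge0 ?(ltW c0) // -lee_fin -Ec.
rewrite -expRM_natl /C in hcn *.
apply: (le_trans (ler_wpM2l (ltW (expR_gt0 _)) hcn)).
by rewrite -expRD le_eqVlt; apply/orP; left; apply/eqP; congr expR; ring.
Qed.

End TruncatedSecondMoment.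

Lemma exists_chernoff_params (R : realFieldType) (q delta : R) : 0 < q -> delta < q^-1 ->
  exists t eps : R, [/\ 0 < t, 0 < eps, eps <= 1, t * eps ^+ 2 < 1
                      & 4 <= (t - t ^+ 2 * eps ^+ 2) / q - 1 - t * delta].
Proof.
move=> q0 dq; set gam := q^-1 - delta; have gam0 : 0 < gam by rewrite subr_gt0.
set t := 6 / gam; have t0 : 0 < t by rewrite divr_gt0.
have tgam : t * gam = 6 by rewrite mulrAC -mulrA divff ?gt_eqF // mulr1.
set eps := Num.min 1 (Num.min (q / t ^+ 2) (1 / (2 * t))).
have t20 : 0 < t ^+ 2 by exact: exprn_gt0.
have e0 : 0 < eps by rewrite !lt_min ltr01 divr_gt0 //= divr_gt0 // mulr_gt0.
have e1 : eps <= 1 by rewrite ge_min lexx.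
have eps_q : eps <= q / t ^+ 2 by rewrite !ge_min lexx orbT.
have eps_t : eps <= 1 / (2 * t) by rewrite !ge_min lexx !orbT.
have e2 : eps ^+ 2 <= eps by rewrite expr2; exact: ler_piMr (ltW e0) e1.
have teps : t * eps <= 1 / 2.
  apply: (le_trans (ler_wpM2l (ltW t0) eps_t)).
  by rewrite le_eqVlt; apply/orP; left; apply/eqP; field; rewrite gt_eqF.
have tq : t ^+ 2 * eps ^+ 2 <= q.
  have : t ^+ 2 * eps <= q by rewrite mulrC -ler_pdivlMr.
  by have := ler_wpM2l (ltW t20) e2; lra.
exists t, eps; split => //.
  by have := ler_wpM2l (ltW t0) e2; lra.
have -> : (t - t ^+ 2 * eps ^+ 2) / q - 1 - t * delta = t * gam - t ^+ 2 * eps ^+ 2 / q - 1.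
  by rewrite /gam; field; rewrite gt_eqF.
have : t ^+ 2 * eps ^+ 2 / q <= 1 by rewrite ler_pdivrMr // mul1r.
rewrite tgam; lra.
Qed.

Lemma chernoff_exponent_le (R : realFieldType) (k N p u : R) : 4 <= k -> 0 <= p -> 0 < N ->
  u / N <= 2 * p -> 2 * u <= k * (N * p).
Proof.
move=> k4 p0 N0 hu; have Np : 0 <= N * p by apply: mulr_ge0 => //; exact: ltW.
have : u <= 2 * (N * p) by rewrite mulrCA -ler_pdivrMl // [_ * u]mulrC.
by have := ler_wpM2r Np k4; lra.
Qed.

Lemma sqr_div_cvg0 (R : realType) (u : nat -> R) :
  (u n / Num.sqrt n%:R) @[n --> \oo] --> 0 -> (u n ^+ 2 / n%:R) @[n --> \oo] --> 0.
Proof.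
move=> hu; have -> : (fun n => u n ^+ 2 / n%:R)
    = (fun n => (u n / Num.sqrt n%:R) * (u n / Num.sqrt n%:R)).
  by apply: funext => n; rewrite -expr2 expr_div_n sqr_sqrtr.
by rewrite -(mulr0 0); exact: cvgM.
Qed.

Lemma inf_pos_support (R : realType) (f : R -> R) :
  (forall s s', 0 <= s -> s <= s' -> f s <= f s') ->
  (exists x, 0 <= x /\ 0 < f x) ->
  let b := inf [set x | 0 <= x /\ 0 < f x] in 0 <= b /\ 0 < f (b + 1).
Proof.
move=> f_homo [x0 hx0] b.
have b0 : 0 <= b by apply: lb_le_inf => [|y []]; first by exists x0.
split=> //; have [y [y0 fy0] yb] : exists2 y, [set x | 0 <= x /\ 0 < f x] y & y < b + 1.
  by apply: inf_lt; [exists x0 | rewrite ltrDl].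
by apply: (lt_le_trans fy0); apply: f_homo => //; exact: ltW.
Qed.

Section TruncationLevel.
Variables (R : realType) (f : R -> R) (b : R).
Hypotheses (b0 : 0 < b) (fb0 : 0 < f b)
  (f_homo : forall s s', 0 <= s -> s <= s' -> f s <= f s')
  (f_small : forall th, 0 < th -> \forall s \near +oo, f s <= th * s ^+ 2).

Definition trunc_level (th : R) : R := inf [set s | b <= s /\ f s / s ^+ 2 <= th].

Lemma trunc_level_set_nonempty th : 0 < th -> [set s | b <= s /\ f s / s ^+ 2 <= th] !=set0.
Proof.
move=> th0; have [S [_ hS]] := f_small th0.
set s := Num.max (Num.max S 0 + 1) b.
have s0 : 0 < s by rewrite lt_max ltr_pwDr // le_max lexx orbT.
exists s; split; first by rewrite le_max lexx orbT.
rewrite ler_pdivrMr ?exprn_gt0 //; apply: hS.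
by rewrite lt_max; apply/orP; left; rewrite ltr_pwDr // le_max lexx.
Qed.

Lemma trunc_level_ge M th : 0 < th -> th < f b / M ^+ 2 -> M <= trunc_level th.
Proof.
move=> th0 thM; apply: lb_le_inf; first exact: trunc_level_set_nonempty.
move=> s [bs hs]; rewrite leNgt; apply/negP => sM.
have s0 : 0 < s := lt_le_trans b0 bs.
have s2 : 0 < s ^+ 2 by exact: exprn_gt0.
have : f b / M ^+ 2 <= f s / s ^+ 2.
  have sM2 : s ^+ 2 <= M ^+ 2 by rewrite !expr2; nra.
  apply: (le_trans (y := f b / s ^+ 2)).
    by rewrite ler_pM2l // lef_pV2 // posrE exprn_gt0 // (lt_trans s0 sM).
  by rewrite ler_pM2r ?invr_gt0 //; apply: f_homo => //; exact: ltW.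
lra.
Qed.

(* [3/4 Z] lies below the infimum [Z], so it violates the defining inequality. *)
Lemma trunc_level_ratio th : 0 < th -> 2 * b <= trunc_level th ->
  th <= 2 * (f (trunc_level th) / trunc_level th ^+ 2).
Proof.
move=> th0; set Z := trunc_level th => bZ.
have Z0 : 0 < Z by apply: lt_le_trans bZ; rewrite mulr_gt0.
have Z2 : 0 < Z ^+ 2 by exact: exprn_gt0.
set s := 3 / 4 * Z.
have s0 : 0 < s by rewrite mulr_gt0.
have bs : b <= s by rewrite /s; lra.
have hs : th < f s / s ^+ 2.
  rewrite ltNge; apply/negP => sS.
  have : Z <= s by apply: ge_inf; [exists b => x [] | split].
  by rewrite /s; lra.
have es : f s / s ^+ 2 = 16 / 9 * (f s / Z ^+ 2) by rewrite /s; field; rewrite gt_eqF.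
have hfZ : f s / Z ^+ 2 <= f Z / Z ^+ 2.
  by rewrite ler_pM2r ?invr_gt0 //; apply: f_homo; [exact: ltW | rewrite /s; lra].
have hfs : 0 <= f s / Z ^+ 2.
  by apply: divr_ge0; [exact: le_trans (ltW fb0) (f_homo (ltW b0) bs) | exact: ltW].
lra.
Qed.

Lemma trunc_level_eventually (th : nat -> R) M : 2 * b <= M ->
  (\forall n \near \oo, 0 < th n) -> th n @[n --> \oo] --> 0 ->
  \forall n \near \oo, M <= trunc_level (th n) /\
                     th n <= 2 * (f (trunc_level (th n)) / trunc_level (th n) ^+ 2).
Proof.
move=> bM th0 th_cvg.
have M0 : 0 < M by apply: lt_le_trans bM; rewrite mulr_gt0.
have fbM : 0 < f b / M ^+ 2 by rewrite divr_gt0 ?exprn_gt0.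
apply: filterS2 th0 (cvgr0_norm_lt _ th_cvg _ fbM) => n thn0.
rewrite ger0_norm; last exact: ltW.
move=> thn; have MZ := trunc_level_ge thn0 thn.
by split => //; apply: trunc_level_ratio => //; exact: le_trans MZ.
Qed.

End TruncationLevel.

Theorem proposition4p3 (R : realType) (Omega : Type) (H : set (Omega -> R))
  (E : (Omega -> R) -> \bar R) (X : Omega -> R) (Xs : nat -> Omega -> R)
  (xs : nat -> R) (r : R) :
  sublinear_space H E ->
  H X -> (forall i, H (Xs i)) ->
  indep_seq H E Xs ->
  (forall i, ident_distr E (Xs i) X) ->
  E X = 0%E -> Elow E X = 0%E ->
  let l := fun x : R => fine (E (fun w => (Num.min (X w ^+ 2) (x ^+ 2))%R)) in
  (* (I) V(|X| >= x) = o(x^{-2} l(x)) *)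
  (forall eps : R, 0 < eps -> \forall x \near +oo,
     (capV H E [set w | (x <= `|X w|)%R] <= (eps * (l x / x ^+ 2))%:E)%E) ->
  (* (II) limsup_{x->oo} E[X^2 /\ x^2] / Elow[X^2 /\ x^2] < r^2 *)
  0 < r ->
  (exists q : R, q < r ^+ 2 /\ \forall x \near +oo,
     (0 < Elow E (fun w => (Num.min (X w ^+ 2) (x ^+ 2))%R))%E /\
     (E (fun w => (Num.min (X w ^+ 2) (x ^+ 2))%R)
        <= q%:E * Elow E (fun w => (Num.min (X w ^+ 2) (x ^+ 2))%R))%E) ->
  (* (III) E[(|X| - c)^+] -> 0 as c -> oo *)
  (E (fun w => (Num.max (`|X w| - c) 0)%R) @[c --> +oo] --> 0%E) ->
  (* (IV) x_n -> oo and x_n = o(sqrt n) *)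
  (xs n @[n --> \oo] --> +oo) ->
  ((xs n / Num.sqrt n%:R) @[n --> \oo] --> 0) ->
  let b0 := inf [set x : R | 0 <= x /\ 0 < l x] in
  let z := fun n : nat =>
    inf [set s : R | b0 + 1 <= s /\ l s / s ^+ 2 <= xs n ^+ 2 / n%:R] in
  forall delta : R, 0 < delta -> delta < r ^- 2 ->
  \forall n \near \oo,
    (capV H E [set w | (\sum_(i < n) Xs i w ^+ 2 <= delta * n%:R * l (z n))%R]
      <= (expR (- (2 * xs n ^+ 2)))%:E)%E.
Proof.
move=> SL HX HXs Hind Hid _ _ l hI r0 [q [qr hII]] _ xs_cvg xs_sqrt b0 z delta d0 dr.
have hmom := trunc_moment_ratio_near SL HX hII.
have [q0 l_pos] := trunc_moment_ratio_pos SL HX hmom.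
have [X1 [_ hX1]] := hmom.
have dq : delta < q^-1.
  by apply: lt_le_trans dr _; rewrite lef_pV2 ?posrE ?exprn_gt0 // ltW.
have [t [eps [t0 e0 e1 te hkap]]] := exists_chernoff_params q0 dq.
have [X0 [_ hX0]] := hI (eps ^+ 2 / t ^+ 2) (divr_gt0 (exprn_gt0 2 e0) (exprn_gt0 2 t0)).
have l_homo := trunc_moment_le_homo SL HX.
have [b00 lb0] : 0 <= b0 /\ 0 < l (b0 + 1) := inf_pos_support l_homo l_pos.
set M := Num.max (Num.max (X0 / eps) X1) (2 * (b0 + 1)) + 1.
have [MX0 MX1 Mb] : [/\ X0 / eps < M, X1 < M & 2 * (b0 + 1) <= M].
  have MM : Num.max (Num.max (X0 / eps) X1) (2 * (b0 + 1)) < M by rewrite /M ltrDl.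
  by split; [| | apply: ltW]; apply: le_lt_trans MM; rewrite !le_max lexx ?orbT.
have th_pos : \forall n \near \oo, 0 < xs n ^+ 2 / n%:R.
  have xs_pos : \forall n \near \oo, 0 < xs n by move/cvgryPgt: xs_cvg; apply.
  have n_pos : \forall n \near \oo, (0 < n)%N by exists 1%N.
  by apply: filterS2 xs_pos n_pos => n xn0 n0; rewrite divr_gt0 ?exprn_gt0 ?ltr0n.
have := trunc_level_eventually (ltr_pwDr ltr01 b00) lb0 l_homo
  (trunc_moment_sqr_small SL HX hI) Mb th_pos (sqr_div_cvg0 xs_sqrt).
apply: filterS2 th_pos => n thn0 [zM thz]; set Z := trunc_level _ _ _ in zM thz.
have Z0 : 0 < Z by apply: lt_le_trans zM; apply: lt_le_trans Mb; rewrite mulr_gt0 // ltr_pwDr.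
have hX0Z : X0 < eps * Z by rewrite mulrC -ltr_pdivrMr // (lt_le_trans MX0 zM).
have hE := E_exp_trunc_le SL HX Z0 t0 e0 e1 te q0 (hX1 Z (lt_le_trans MX1 zM)).2 (hX0 _ hX0Z).
apply: (le_trans (capV_sum_sqr_le SL HX HXs Hind Hid n delta Z0 t0 hE)).
rewrite lee_fin ler_expR lerN2; apply: chernoff_exponent_le hkap _ _ thz.
  by rewrite divr_ge0 ?sqr_ge0 // (trunc_moment_ge0 SL HX).
by rewrite ltr0n lt0n; apply: contraTneq thn0 => ->; rewrite mulr0n invr0 mulr0 ltxx.
Qed.
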